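(* For each $f\in\{1,2,3,4\}$, $\mathcal{C}(4,f)\neq\emptyset$; that is, there exists a transitive circle exchange transformation of $4$ subintervals with exactly $f$ flips.
   Context: Let $S^1=[0,1]/(0\sim1)$ with orientation induced by $[0,1]$. An $n$-CET is an injective map $T:\bigcup_{i=1}^n I_i\to S^1$, where $I_1,\dots,I_n$ are pairwise disjoint open subintervals of $S^1$ whose closures cover $S^1$, which is an isometry on each $I_i$ and cannot be continuously extended to a larger open subset of $S^1$. A flip is an $I_i$ on which $T$ reverses orientation. $T$ is transitive if some orbit $\{T^m(p): m\in\mathbb{Z},\ p\in\mathrm{Dom}(T^m)\}$ is dense in $S^1$. $\mathcal{C}(n,f)$ is the set of transitive $n$-CETs with exactly $f$ flips. *)

From Stdlib Require Import Reals Lra List.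
Open Scope R_scope.

(* The circle S^1 = [0,1]/(0~1) is represented by the points x with 0 <= x < 1;
   the projection R -> S^1 is frac_part.  Orientation: increasing direction. *)
Definition circ_pt (x : R) : Prop := 0 <= x < 1.

Definition cdist (x y : R) : R := Rmin (Rabs (x - y)) (1 - Rabs (x - y)).

Definition arc (a l : R) (x : R) : Prop :=
  exists t, 0 < t < l /\ x = frac_part (a + t).

Definition carc (a l : R) (x : R) : Prop :=
  exists t, 0 <= t <= l /\ x = frac_part (a + t).

Definition open_arc (a l : R) : Prop := 0 <= a < 1 /\ 0 < l <= 1.

Definition Dom (n : nat) (a l : nat -> R) (x : R) : Prop :=
  exists i, (i < n)%nat /\ arc (a i) (l i) x.

Definition preserves (a l : R) (T : R -> R) : Prop :=
  exists c, forall t, 0 < t < l -> T (frac_part (a + t)) = frac_part (c + t).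

Definition reverses (a l : R) (T : R -> R) : Prop :=
  exists c, forall t, 0 < t < l -> T (frac_part (a + t)) = frac_part (c - t).

Definition is_CET (n : nat) (a l : nat -> R) (T : R -> R) : Prop :=
  (forall i, (i < n)%nat -> open_arc (a i) (l i)) /\
  (forall i j x, (i < n)%nat -> (j < n)%nat -> i <> j ->
     arc (a i) (l i) x -> arc (a j) (l j) x -> False) /\
  (forall x, circ_pt x -> exists i, (i < n)%nat /\ carc (a i) (l i) x) /\
  (forall x y, Dom n a l x -> Dom n a l y -> T x = T y -> x = y) /\
  (forall i, (i < n)%nat -> preserves (a i) (l i) T \/ reverses (a i) (l i) T) /\
  (* cannot be continuously extended to a larger open subset of S^1:
     at no point p outside the domain does T have a limit in S^1 *)
  (forall p, circ_pt p -> ~ Dom n a l p ->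
     ~ (exists y, circ_pt y /\
          forall eps, 0 < eps -> exists delta, 0 < delta /\
            forall z, Dom n a l z -> cdist z p < delta -> cdist (T z) y < eps)).

Fixpoint iter_def (n : nat) (a l : nat -> R) (T : R -> R) (m : nat) (x y : R)
  : Prop :=
  match m with
  | O => x = y
  | S m' => Dom n a l x /\ iter_def n a l T m' (T x) y
  end.

(* q = T^m p for some m in Z with p in Dom(T^m)  (negative m: T^(-m) q = p) *)
Definition orbit (n : nat) (a l : nat -> R) (T : R -> R) (p q : R) : Prop :=
  exists m : nat, iter_def n a l T m p q \/ iter_def n a l T m q p.

Definition transitive (n : nat) (a l : nat -> R) (T : R -> R) : Prop :=
  exists p, circ_pt p /\
    forall y, circ_pt y -> forall eps, 0 < eps ->
      exists q, orbit n a l T p q /\ cdist q y < eps.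

Definition nflips (n : nat) (a l : nat -> R) (T : R -> R) (f : nat) : Prop :=
  exists s : nat -> bool,
    (forall i, (i < n)%nat -> (s i = true <-> reverses (a i) (l i) T)) /\
    length (filter s (seq 0 n)) = f.

Definition in_C (n f : nat) (a l : nat -> R) (T : R -> R) : Prop :=
  is_CET n a l T /\ transitive n a l T /\ nflips n a l T f.

(* Each example is a 4-CET [T] whose first return map to a base arc [[0, L)] is the
   rotation by [g L], with [g = (sqrt 5 - 1) / 2]: [T^hA] translates [(0, (1 - g) L)] by [g L]
   and [T^hB] translates [((1 - g) L, L)] by [-(1 - g) L].  Since [g] is irrational (its powers
   are integer combinations of [1] and [g] tending to [0]), the rotation orbit of [L/2] is
   dense in [[0, L)] and never meets the discontinuities of the return map.  The levels of
   the tower over [[0, L)] below the return tile the circle, so the [T]-orbit of [L/2] is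
   dense.  That [T] is a CET, in particular not extendable, comes from the jumps of [T] at
   the four breakpoints; the examples differ in which pieces are flipped. *)

From Stdlib Require Import Reals.
From Stdlib Require Import Lra Lia List ZArith.
Import ListNotations.
Open Scope R_scope.

Lemma frac_part_of_bounds (x : R) (z : Z) :
  IZR z <= x < IZR z + 1 -> frac_part x = x - IZR z.
Proof.
  intros Hx.
  destruct (Int_part_frac_part_spec x z (x - IZR z)) as [_ E]; [lra | ring | ].
  now rewrite <- E.
Qed.

Lemma frac_part_id (x : R) : 0 <= x < 1 -> frac_part x = x.
Proof. intros Hx. rewrite (frac_part_of_bounds x 0); simpl; lra. Qed.

Lemma frac_part_add_IZR (x : R) (z : Z) : frac_part (x + IZR z) = frac_part x.
Proof.
  pose proof (base_fp x). pose proof (Rplus_Int_part_frac_part x).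
  rewrite (frac_part_of_bounds (x + IZR z) (Int_part x + z)), plus_IZR.
  - unfold frac_part. ring.
  - rewrite plus_IZR. lra.
Qed.

Lemma frac_part_opp (x : R) : frac_part x <> 0 -> frac_part (- x) = 1 - frac_part x.
Proof.
  intros Hx. pose proof (base_fp x). pose proof (Rplus_Int_part_frac_part x).
  rewrite (frac_part_of_bounds (- x) (- Int_part x - 1)); rewrite minus_IZR, opp_IZR.
  - unfold frac_part. ring.
  - lra.
Qed.

Lemma frac_part_eq_IZR_diff (x y : R) :
  frac_part x = frac_part y -> exists z, x - y = IZR z.
Proof.
  unfold frac_part. intros E. exists (Int_part x - Int_part y)%Z.
  rewrite minus_IZR. lra.
Qed.

Lemma IZR_not_in_unit_interval (z : Z) : ~ (0 < IZR z < 1).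
Proof. intros [H0 H1]. apply lt_IZR in H0. apply lt_IZR in H1. lia. Qed.

Lemma cdist_le_Rabs (x y : R) : cdist x y <= Rabs (x - y).
Proof. apply Rmin_l. Qed.

Lemma cdist_le_compl (x y : R) : cdist x y <= 1 - Rabs (x - y).
Proof. apply Rmin_r. Qed.

Lemma cdist_sym (x y : R) : cdist x y = cdist y x.
Proof. unfold cdist. now rewrite Rabs_minus_sym. Qed.

Lemma cdist_triangle (x y z : R) : 0 <= x <= 1 -> 0 <= y <= 1 -> 0 <= z <= 1 ->
  cdist x z <= cdist x y + cdist y z.
Proof.
  intros Hx Hy Hz. unfold cdist, Rmin.
  repeat destruct (Rle_dec _ _); unfold Rabs in *; repeat destruct (Rcase_abs _); lra.
Qed.

Lemma cdist_pos (x y : R) : 0 < Rabs (x - y) < 1 -> 0 < cdist x y.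
Proof. intros H. unfold cdist, Rmin. destruct (Rle_dec _ _); lra. Qed.

Definition inv_golden : R := (sqrt 5 - 1) / 2.

Lemma inv_golden_sq : inv_golden * inv_golden = 1 - inv_golden.
Proof.
  unfold inv_golden. pose proof (sqrt_sqrt 5 ltac:(lra)). nra.
Qed.

Lemma inv_golden_bounds : 0.6 < inv_golden < 0.625.
Proof.
  unfold inv_golden. pose proof (sqrt_pos 5). pose proof (sqrt_sqrt 5 ltac:(lra)).
  assert (2.2 < sqrt 5 < 2.25) by nra. lra.
Qed.

Lemma inv_golden_pow_integral (n : nat) :
  exists p q : Z, inv_golden ^ n = IZR p + IZR q * inv_golden.
Proof.
  induction n as [|n [p [q IH]]].
  - exists 1%Z, 0%Z. simpl. ring.
  - exists q, (p - q)%Z. rewrite minus_IZR. simpl. rewrite IH.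
    transitivity (IZR p * inv_golden + IZR q * (inv_golden * inv_golden)); [ring|].
    rewrite inv_golden_sq. ring.
Qed.

Lemma inv_golden_pow_small (e : R) : 0 < e -> exists n, inv_golden ^ n < e.
Proof.
  intros He. pose proof inv_golden_bounds.
  destruct (pow_lt_1_zero inv_golden ltac:(rewrite Rabs_pos_eq; lra) e He) as [N HN].
  exists N. specialize (HN N (le_n N)).
  rewrite Rabs_pos_eq in HN; [exact HN | apply pow_le; lra].
Qed.

(* [k g^n] is an integer combination of [k] and [k g], and lies in [(0,1)] for large [n]. *)
Lemma inv_golden_irrational (k : nat) (z : Z) : (1 <= k)%nat -> INR k * inv_golden <> IZR z.
Proof.
  intros Hk Hz. pose proof inv_golden_bounds.
  assert (HkR : 1 <= INR k) by (apply (le_INR 1); lia).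
  destruct (inv_golden_pow_small (/ INR k)) as [n Hn]; [apply Rinv_0_lt_compat; lra|].
  destruct (inv_golden_pow_integral n) as [p [q Hpq]].
  assert (Hpos : 0 < inv_golden ^ n) by (apply pow_lt; lra).
  apply (IZR_not_in_unit_interval (Z.of_nat k * p + q * z)).
  rewrite plus_IZR, !mult_IZR, <- INR_IZR_INZ, <- Hz.
  replace (INR k * IZR p + IZR q * (INR k * inv_golden)) with (INR k * inv_golden ^ n)
    by (rewrite Hpq; ring).
  split; [nra|].
  apply (Rmult_lt_compat_l (INR k)) in Hn; [|lra].
  rewrite Rinv_r in Hn; lra.
Qed.

Lemma inv_golden_near_integer (e : R) : 0 < e -> exists (N : nat) (z : Z) (s : R),
  0 < s < e /\ (INR N * inv_golden = IZR z + s \/ INR N * inv_golden = IZR z - s).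
Proof.
  intros He. pose proof inv_golden_bounds.
  destruct (inv_golden_pow_small (Rmin e 1)) as [n Hn]; [apply Rmin_pos; lra|].
  pose proof (Rmin_l e 1). pose proof (Rmin_r e 1).
  assert (Hpos : 0 < inv_golden ^ n) by (apply pow_lt; lra).
  destruct (inv_golden_pow_integral n) as [p [q Hpq]].
  destruct (Z.lt_trichotomy q 0) as [Hq | [Hq | Hq]].
  - exists (Z.to_nat (- q)), p, (inv_golden ^ n).
    rewrite INR_IZR_INZ, Z2Nat.id, opp_IZR by lia. split; [lra | right; lra].
  - exfalso. subst q. apply (IZR_not_in_unit_interval p). lra.
  - exists (Z.to_nat q), (- p)%Z, (inv_golden ^ n).
    rewrite INR_IZR_INZ, Z2Nat.id, opp_IZR by lia. split; [lra | left; lra].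
Qed.

(* The first [m] with [frac x0 + m s > u] (or [> u + 1] if [frac x0 > u]) overshoots by
   at most [s]. *)
Lemma arith_prog_hits (x0 s u v : R) : 0 <= u < v -> v <= 1 -> 0 < s < v - u ->
  exists m : nat, u < frac_part (x0 + INR m * s) < v.
Proof.
  intros Huv Hv Hs. pose proof (base_fp x0). pose proof (Rplus_Int_part_frac_part x0).
  set (t0 := frac_part x0) in *.
  set (u' := if Rle_dec t0 u then u else u + 1).
  assert (Hu' : t0 <= u' /\ (u' = u \/ u' = u + 1)) by
    (unfold u'; destruct (Rle_dec t0 u); lra).
  set (r := (u' - t0) / s).
  assert (Hr : 0 <= r)
    by (unfold r; apply Rmult_le_pos; [lra | left; apply Rinv_0_lt_compat; lra]).
  assert (Hrs : r * s = u' - t0) by (unfold r; field; lra).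
  pose proof (archimed r) as [Hup1 Hup2].
  assert (Hm : INR (Z.to_nat (up r)) = IZR (up r)).
  { rewrite INR_IZR_INZ, Z2Nat.id; [reflexivity|]. apply le_IZR. lra. }
  exists (Z.to_nat (up r)). rewrite Hm.
  assert (Hlo : u' < t0 + IZR (up r) * s) by nra.
  assert (Hhi : t0 + IZR (up r) * s <= u' + s) by nra.
  destruct Hu' as [_ [E | E]].
  - rewrite (frac_part_of_bounds _ (Int_part x0)); lra.
  - rewrite (frac_part_of_bounds _ (Int_part x0 + 1)); rewrite plus_IZR; simpl; lra.
Qed.

Lemma rotation_pt_dense (u v : R) : 0 <= u < v -> v <= 1 ->
  exists k : nat, u < frac_part (1/2 + INR k * inv_golden) < v.
Proof.
  intros Huv Hv.
  destruct (inv_golden_near_integer (v - u)) as [N [z [s [Hs [HN | HN]]]]]; [lra| |].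
  - destruct (arith_prog_hits (1/2) s u v) as [m Hm]; [lra|lra|lra|].
    exists (m * N)%nat.
    replace (1/2 + INR (m * N) * inv_golden) with (1/2 + INR m * s + IZR (Z.of_nat m * z))
      by (rewrite mult_INR, mult_IZR, <- INR_IZR_INZ, Rmult_assoc, HN; ring).
    now rewrite frac_part_add_IZR.
  - destruct (arith_prog_hits (- (1/2)) s (1 - v) (1 - u)) as [m Hm]; [lra|lra|lra|].
    exists (m * N)%nat.
    replace (1/2 + INR (m * N) * inv_golden) with (- (- (1/2) + INR m * s) + IZR (Z.of_nat m * z))
      by (rewrite mult_INR, mult_IZR, <- INR_IZR_INZ, Rmult_assoc, HN; ring).
    rewrite frac_part_add_IZR, frac_part_opp; lra.
Qed.

Lemma half_plus_inv_golden_not_IZR (k : nat) (z : Z) : 1/2 + INR k * inv_golden <> IZR z.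
Proof.
  intros E. destruct k as [|k].
  - simpl in E. assert (E2 : IZR (2 * z) = IZR 1) by (rewrite mult_IZR; simpl; lra).
    apply eq_IZR in E2. lia.
  - apply (inv_golden_irrational (2 * S k) (2 * z - 1)); [lia|].
    rewrite mult_INR, minus_IZR, mult_IZR. simpl (INR 2). lra.
Qed.

Lemma rotation_pt_neq_0 (k : nat) : frac_part (1/2 + INR k * inv_golden) <> 0.
Proof.
  intros E. destruct (fp_nat _ E) as [z Hz]. exact (half_plus_inv_golden_not_IZR k z Hz).
Qed.

Lemma rotation_pt_neq_jump (k : nat) :
  frac_part (1/2 + INR k * inv_golden) <> 1 - inv_golden.
Proof.
  intros E. unfold frac_part in E.
  apply (half_plus_inv_golden_not_IZR (S k) (Int_part (1/2 + INR k * inv_golden) + 1)).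
  rewrite S_INR, plus_IZR. simpl (IZR 1). lra.
Qed.

(* [Level h lo hi c false] says that [T^h] maps [x] in [(lo, hi)] to [c + x];
   with [true], to [c - x]. *)
Record level : Type := Level {
  lv_height : nat; lv_lo : R; lv_hi : R; lv_shift : R; lv_flip : bool }.

Definition level_map (lv : level) (x : R) : R :=
  if lv_flip lv then lv_shift lv - x else lv_shift lv + x.

Definition level_bot (lv : level) : R :=
  if lv_flip lv then lv_shift lv - lv_hi lv else lv_shift lv + lv_lo lv.

Definition level_top (lv : level) : R :=
  if lv_flip lv then lv_shift lv - lv_lo lv else lv_shift lv + lv_hi lv.

Fixpoint levels_cover (b : R) (lvs : list level) : Prop :=
  match lvs with
  | nil => 1 <= b
  | lv :: lvs => level_bot lv <= b /\ levels_cover (level_top lv) lvs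
  end.

Lemma levels_cover_In (b y : R) (lvs : list level) : levels_cover b lvs -> b <= y < 1 ->
  exists lv, In lv lvs /\ level_bot lv <= y <= level_top lv.
Proof.
  revert b. induction lvs as [|lv lvs IH]; simpl; intros b Hcov Hy; [lra|].
  destruct Hcov as [Hbot Hcov].
  destruct (Rle_dec y (level_top lv)) as [Hle | Hgt].
  - exists lv. split; [now left | lra].
  - destruct (IH (level_top lv) Hcov ltac:(lra)) as [lv' [Hin Hlv']].
    exists lv'. split; [now right | exact Hlv'].
Qed.

Section Orbits.

Variables (n : nat) (a l : nat -> R) (T : R -> R).

Lemma iter_def_app (m k : nat) (x y z : R) :
  iter_def n a l T m x y -> iter_def n a l T k y z -> iter_def n a l T (m + k) x z.
Proof.
  revert x. induction m as [|m IH]; simpl; intros x Hxy Hyz.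
  - now subst.
  - destruct Hxy as [Hx Hxy]. split; [exact Hx | exact (IH _ Hxy Hyz)].
Qed.

Variable L : R.

Definition approached_from_base (y : R) : Prop :=
  forall eps, 0 < eps -> exists j u v, 0 <= u < v /\ v <= L /\
    forall x, u < x < v -> exists q, iter_def n a l T j x q /\ cdist q y < eps.

Definition level_ok (lv : level) : Prop :=
  0 <= lv_lo lv < lv_hi lv /\ lv_hi lv <= L /\
  forall x, lv_lo lv < x < lv_hi lv -> iter_def n a l T (lv_height lv) x (level_map lv x).

Lemma level_ok_approached (lv : level) (y : R) : level_ok lv ->
  level_bot lv <= y <= level_top lv -> approached_from_base y.
Proof.
  intros [Hlo [Hhi Hiter]] Hy eps Heps.
  set (t := if lv_flip lv then lv_shift lv - y else y - lv_shift lv).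
  assert (Ht : lv_lo lv <= t <= lv_hi lv /\ forall x, Rabs (level_map lv x - y) = Rabs (x - t)).
  { unfold t, level_map, level_bot, level_top in *.
    destruct (lv_flip lv); split; try lra; intros x;
      [rewrite <- Rabs_Ropp|]; f_equal; ring. }
  destruct Ht as [Ht Hdist].
  pose proof (Rmax_l (lv_lo lv) (t - eps / 2)). pose proof (Rmax_r (lv_lo lv) (t - eps / 2)).
  pose proof (Rmin_l (lv_hi lv) (t + eps / 2)). pose proof (Rmin_r (lv_hi lv) (t + eps / 2)).
  assert (Huv : Rmax (lv_lo lv) (t - eps / 2) < Rmin (lv_hi lv) (t + eps / 2))
    by (apply Rmax_lub_lt; apply Rmin_glb_lt; lra).
  set (u := Rmax (lv_lo lv) (t - eps / 2)) in *. set (v := Rmin (lv_hi lv) (t + eps / 2)) in *.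
  exists (lv_height lv), u, v. split; [lra|]. split; [lra|].
  intros x Hx. exists (level_map lv x). split; [apply Hiter; lra|].
  eapply Rle_lt_trans; [apply cdist_le_Rabs|]. rewrite Hdist.
  unfold Rabs. destruct (Rcase_abs _); lra.
Qed.

Lemma approached_of_levels (lvs : list level) :
  Forall level_ok lvs -> levels_cover 0 lvs -> forall y, circ_pt y -> approached_from_base y.
Proof.
  intros Hok Hcov y Hy.
  destruct (levels_cover_In 0 y lvs Hcov Hy) as [lv [Hin Hlv]].
  exact (level_ok_approached lv y (proj1 (Forall_forall _ _) Hok lv Hin) Hlv).
Qed.

Variables (hA hB : nat).
Hypothesis HL : 0 < L <= 1.
Hypothesis return_A : forall x, 0 < x < (1 - inv_golden) * L ->
  iter_def n a l T hA x (x + inv_golden * L).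
Hypothesis return_B : forall x, (1 - inv_golden) * L < x < L ->
  iter_def n a l T hB x (x - (1 - inv_golden) * L).

(* The rotation orbit of [L/2] never meets the discontinuities [0] and [(1 - inv_golden) L]. *)
Lemma return_rotation_orbit (k : nat) :
  exists m, iter_def n a l T m (L / 2) (L * frac_part (1/2 + INR k * inv_golden)).
Proof.
  pose proof inv_golden_bounds.
  induction k as [|k [m Hm]].
  - exists O. simpl. rewrite Rmult_0_l, Rplus_0_r, frac_part_id; lra.
  - pose proof (base_fp (1/2 + INR k * inv_golden)).
    pose proof (rotation_pt_neq_0 k). pose proof (rotation_pt_neq_jump k).
    set (t := frac_part (1/2 + INR k * inv_golden)) in *.
    assert (E : 1/2 + INR (S k) * inv_golden
                = t + inv_golden + IZR (Int_part (1/2 + INR k * inv_golden))).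
    { rewrite S_INR. unfold t, frac_part. ring. }
    rewrite E, frac_part_add_IZR.
    destruct (Rlt_dec t (1 - inv_golden)) as [Ht | Ht].
    + exists (m + hA)%nat. apply (iter_def_app _ _ _ _ _ Hm).
      rewrite frac_part_id by lra. rewrite Rmult_plus_distr_l, (Rmult_comm L inv_golden).
      apply return_A. split; nra.
    + exists (m + hB)%nat. apply (iter_def_app _ _ _ _ _ Hm).
      rewrite (frac_part_of_bounds _ 1) by (simpl; lra).
      replace (L * (t + inv_golden - IZR 1)) with (L * t - (1 - inv_golden) * L)
        by (simpl; ring).
      apply return_B. split; nra.
Qed.

Lemma transitive_of_return_rotation :
  (forall y, circ_pt y -> approached_from_base y) -> transitive n a l T.
Proof.
  intros Hreach. exists (L / 2). split; [unfold circ_pt; lra|].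
  intros y Hy eps Heps.
  destruct (Hreach y Hy eps Heps) as [j [u [v [Hu [Hv Hj]]]]].
  assert (Eu : u / L * L = u) by (field; lra).
  assert (Ev : v / L * L = v) by (field; lra).
  destruct (rotation_pt_dense (u / L) (v / L)) as [k Hk]; [split; nra | nra |].
  destruct (return_rotation_orbit k) as [m Hm].
  destruct (Hj (L * frac_part (1/2 + INR k * inv_golden))) as [q [Hq Hqy]]; [nra|].
  exists q. split; [|exact Hqy]. exists (m + j)%nat. left. exact (iter_def_app _ _ _ _ _ Hm Hq).
Qed.

End Orbits.

Lemma arc_of_bounds (a l x : R) : 0 <= a -> 0 < l -> a + l <= 1 ->
  arc a l x <-> a < x < a + l.
Proof.
  intros Ha Hl Hal. unfold arc. split.
  - intros [t [Ht E]]. rewrite frac_part_id in E by lra. lra.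
  - intros Hx. exists (x - a). split; [lra|]. rewrite frac_part_id; [ring | lra].
Qed.

(* Comparing [frac (c1 + t) = frac (c2 - t)] at [t = l/4] and [t = l/2] gives an integer
   equal to [l/2]. *)
Lemma preserves_not_reverses (a l : R) (T : R -> R) : 0 < l <= 1 ->
  preserves a l T -> ~ reverses a l T.
Proof.
  intros Hl [c1 Hc1] [c2 Hc2].
  assert (Hfrac : forall t, 0 < t < l -> exists z, c1 + t - (c2 - t) = IZR z).
  { intros t Ht. apply frac_part_eq_IZR_diff. now rewrite <- Hc1, <- Hc2. }
  destruct (Hfrac (l / 4) ltac:(lra)) as [z1 E1].
  destruct (Hfrac (l / 2) ltac:(lra)) as [z2 E2].
  apply (IZR_not_in_unit_interval (z2 - z1)). rewrite minus_IZR. lra.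
Qed.

Definition side_limit (D : R -> Prop) (T : R -> R) (p v : R) : Prop :=
  forall delta, 0 < delta -> exists z, D z /\ cdist z p < delta /\ cdist (T z) v < delta.

Lemma side_limit_of_path (D : R -> Prop) (T : R -> R) (p v w : R) (z : R -> R) : 0 < w ->
  (forall t, 0 < t < w -> D (z t) /\ cdist (z t) p <= t /\ Rabs (T (z t) - v) <= t) ->
  side_limit D T p v.
Proof.
  intros Hw Hz delta Hdelta.
  pose proof (Rmin_l delta w). pose proof (Rmin_r delta w).
  pose proof (Rmin_pos delta w Hdelta Hw).
  destruct (Hz (Rmin delta w / 2) ltac:(lra)) as [HD [Hp Hv]].
  exists (z (Rmin delta w / 2)). split; [exact HD|]. split; [lra|].
  eapply Rle_lt_trans; [apply cdist_le_Rabs | lra].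
Qed.

Lemma no_limit_of_side_limits (D : R -> Prop) (T : R -> R) (p vL vR : R) :
  (forall z, D z -> 0 <= T z <= 1) -> 0 <= vL <= 1 -> 0 <= vR <= 1 -> 0 < cdist vL vR ->
  side_limit D T p vL -> side_limit D T p vR ->
  ~ (exists y, circ_pt y /\ forall eps, 0 < eps -> exists delta, 0 < delta /\
       forall z, D z -> cdist z p < delta -> cdist (T z) y < eps).
Proof.
  intros HT HvL HvR Hd HL HR [y [Hy Hlim]]. unfold circ_pt in Hy.
  destruct (Hlim (cdist vL vR / 4)) as [delta [Hdelta Hz]]; [lra|].
  pose proof (Rmin_l delta (cdist vL vR / 4)). pose proof (Rmin_r delta (cdist vL vR / 4)).
  pose proof (Rmin_pos delta (cdist vL vR / 4) Hdelta ltac:(lra)).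
  set (e := Rmin delta (cdist vL vR / 4)) in *.
  destruct (HL e) as [zL [DL [HpL HzL]]]; [lra|].
  destruct (HR e) as [zR [DR [HpR HzR]]]; [lra|].
  pose proof (Hz zL DL ltac:(lra)) as HyL. pose proof (Hz zR DR ltac:(lra)) as HyR.
  pose proof (HT zL DL). pose proof (HT zR DR).
  pose proof (cdist_triangle vL (T zL) vR HvL ltac:(lra) HvR).
  pose proof (cdist_triangle (T zL) y vR ltac:(lra) ltac:(lra) HvR).
  pose proof (cdist_triangle y (T zR) vR ltac:(lra) ltac:(lra) HvR).
  rewrite cdist_sym in HzL, HyR. lra.
Qed.

Record cet4 : Type := Cet4 {
  brk1 : R; brk2 : R; brk3 : R; offset : nat -> R; flip : nat -> bool }.

Definition brk (d : cet4) (i : nat) : R :=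
  match i with 0 => 0 | 1 => brk1 d | 2 => brk2 d | 3 => brk3 d | _ => 1 end.

Definition piece_len (d : cet4) (i : nat) : R := brk d (S i) - brk d i.

Definition slope (d : cet4) (i : nat) : R := if flip d i then -1 else 1.

Definition piece_of (d : cet4) (x : R) : nat :=
  if Rlt_dec x (brk1 d) then 0 else if Rlt_dec x (brk2 d) then 1
  else if Rlt_dec x (brk3 d) then 2 else 3.

Definition cet4_map (d : cet4) (x : R) : R :=
  offset d (piece_of d x) + slope d (piece_of d x) * x.

Definition start_value (d : cet4) (i : nat) : R := offset d i + slope d i * brk d i.

Definition end_value (d : cet4) (i : nat) : R := offset d i + slope d i * brk d (S i).

Definition prev_piece (i : nat) : nat := match i with 0 => 3 | S i => i end.

Record cet4_wf (d : cet4) : Prop := {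
  brk_increasing : 0 < brk1 d /\ brk1 d < brk2 d /\ brk2 d < brk3 d /\ brk3 d < 1;
  values_in_circle : forall i, (i < 4)%nat ->
    0 <= start_value d i <= 1 /\ 0 <= end_value d i <= 1;
  images_disjoint : forall i j x y, (i < 4)%nat -> (j < 4)%nat -> i <> j ->
    brk d i < x < brk d (S i) -> brk d j < y < brk d (S j) ->
    offset d i + slope d i * x <> offset d j + slope d j * y;
  (* distinct one-sided limits on the circle, so that no breakpoint is removable *)
  jumps : forall k, (k < 4)%nat ->
    0 < Rabs (end_value d (prev_piece k) - start_value d k) < 1 }.

Lemma slope_cases (d : cet4) (i : nat) : slope d i = -1 \/ slope d i = 1.
Proof. unfold slope. destruct (flip d i); auto. Qed.

Section Cet4.

Variable d : cet4.
Hypothesis Hd : cet4_wf d.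

Let D := Dom 4 (brk d) (piece_len d).

Lemma brk_bounds (i : nat) : (i < 4)%nat ->
  0 <= brk d i /\ brk d i < brk d (S i) /\ brk d (S i) <= 1.
Proof.
  pose proof (brk_increasing d Hd). intros Hi.
  destruct i as [|[|[|[|i]]]]; simpl; lra || lia.
Qed.

Lemma arc_piece (i : nat) (x : R) : (i < 4)%nat ->
  arc (brk d i) (piece_len d i) x <-> brk d i < x < brk d (S i).
Proof.
  intros Hi. pose proof (brk_bounds i Hi). unfold piece_len.
  rewrite arc_of_bounds by lra. replace (brk d i + (brk d (S i) - brk d i)) with (brk d (S i))
    by ring. reflexivity.
Qed.

Lemma Dom_cet4 (x : R) : D x <-> exists i, (i < 4)%nat /\ brk d i < x < brk d (S i).
Proof.
  split; intros [i [Hi Hx]]; exists i; split; auto; now apply (arc_piece i x Hi).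
Qed.

Lemma cet4_map_piece (i : nat) (x : R) : (i < 4)%nat -> brk d i < x < brk d (S i) ->
  cet4_map d x = offset d i + slope d i * x.
Proof.
  intros Hi Hx. pose proof (brk_increasing d Hd). unfold cet4_map, piece_of.
  destruct i as [|[|[|[|i]]]]; simpl in Hx; try lia;
    repeat destruct (Rlt_dec _ _); reflexivity || lra.
Qed.

Lemma cet4_map_in_unit (i : nat) (x : R) : (i < 4)%nat -> brk d i < x < brk d (S i) ->
  0 < cet4_map d x < 1.
Proof.
  intros Hi Hx. rewrite (cet4_map_piece i x Hi Hx).
  pose proof (values_in_circle d Hd i Hi). unfold start_value, end_value in *.
  destruct (slope_cases d i) as [E | E]; rewrite E in *; lra.
Qed.

Lemma cet4_map_shift (i : nat) (t : R) : (i < 4)%nat -> 0 < t < piece_len d i ->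
  cet4_map d (frac_part (brk d i + t)) = frac_part (start_value d i + slope d i * t).
Proof.
  intros Hi Ht. pose proof (brk_bounds i Hi). unfold piece_len in Ht.
  assert (Hx : brk d i < brk d i + t < brk d (S i)) by lra.
  pose proof (cet4_map_in_unit i _ Hi Hx).
  rewrite (frac_part_id (brk d i + t)) by lra.
  rewrite (cet4_map_piece i _ Hi Hx) in *. unfold start_value.
  rewrite frac_part_id; [ring | lra].
Qed.

Lemma cet4_piece_preserves (i : nat) : (i < 4)%nat -> flip d i = false ->
  preserves (brk d i) (piece_len d i) (cet4_map d).
Proof.
  intros Hi Hf. exists (start_value d i). intros t Ht.
  rewrite (cet4_map_shift i t Hi Ht). unfold slope. rewrite Hf. f_equal. ring.
Qed.

Lemma cet4_piece_reverses (i : nat) : (i < 4)%nat -> flip d i = true ->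
  reverses (brk d i) (piece_len d i) (cet4_map d).
Proof.
  intros Hi Hf. exists (start_value d i). intros t Ht.
  rewrite (cet4_map_shift i t Hi Ht). unfold slope. rewrite Hf. f_equal. ring.
Qed.

Lemma cet4_flip_reverses (i : nat) : (i < 4)%nat ->
  flip d i = true <-> reverses (brk d i) (piece_len d i) (cet4_map d).
Proof.
  intros Hi. split; [exact (cet4_piece_reverses i Hi)|].
  intros Hrev. destruct (flip d i) eqn:Hf; [reflexivity|]. exfalso.
  pose proof (brk_bounds i Hi).
  apply (preserves_not_reverses (brk d i) (piece_len d i) (cet4_map d)
           ltac:(unfold piece_len; lra)
           (cet4_piece_preserves i Hi Hf) Hrev).
Qed.

Lemma cet4_piece_isometry (i : nat) : (i < 4)%nat ->
  preserves (brk d i) (piece_len d i) (cet4_map d) \/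
  reverses (brk d i) (piece_len d i) (cet4_map d).
Proof.
  intros Hi. destruct (flip d i) eqn:Hf.
  - right. exact (cet4_piece_reverses i Hi Hf).
  - left. exact (cet4_piece_preserves i Hi Hf).
Qed.

Lemma not_Dom_brk (p : R) : circ_pt p -> ~ D p -> exists k, (k < 4)%nat /\ p = brk d k.
Proof.
  intros Hp HnD. unfold circ_pt in Hp. pose proof (brk_increasing d Hd).
  destruct (Req_dec p 0) as [E|N0]; [exists 0%nat; split; [lia | exact E]|].
  destruct (Req_dec p (brk1 d)) as [E|N1]; [exists 1%nat; split; [lia | exact E]|].
  destruct (Req_dec p (brk2 d)) as [E|N2]; [exists 2%nat; split; [lia | exact E]|].
  destruct (Req_dec p (brk3 d)) as [E|N3]; [exists 3%nat; split; [lia | exact E]|].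
  exfalso. apply HnD, Dom_cet4.
  destruct (Rlt_dec p (brk1 d)); [exists 0%nat; simpl; split; [lia | lra]|].
  destruct (Rlt_dec p (brk2 d)); [exists 1%nat; simpl; split; [lia | lra]|].
  destruct (Rlt_dec p (brk3 d)); [exists 2%nat; simpl; split; [lia | lra]|].
  exists 3%nat; simpl; split; [lia | lra].
Qed.

Lemma cet4_left_limit (k : nat) : (k < 4)%nat ->
  side_limit D (cet4_map d) (brk d k) (end_value d (prev_piece k)).
Proof.
  intros Hk. set (i := prev_piece k).
  assert (Hi : (i < 4)%nat) by (unfold i; destruct k as [|[|[|[|k]]]]; simpl; lia).
  pose proof (brk_bounds i Hi).
  apply (side_limit_of_path _ _ _ _ (piece_len d i) (fun t => brk d (S i) - t));
    [unfold piece_len; lra|].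
  intros t Ht. unfold piece_len in Ht.
  assert (Hz : brk d i < brk d (S i) - t < brk d (S i)) by lra.
  split; [apply Dom_cet4; now exists i|]. split.
  - (* at [k = 0] the left neighbour is the last piece, approaching [1 ~ 0] *)
    pose proof (cdist_le_Rabs (brk d (S i) - t) (brk d k)).
    pose proof (cdist_le_compl (brk d (S i) - t) (brk d k)).
    unfold i in *; destruct k as [|[|[|[|k]]]]; simpl in *; try lia;
      unfold Rabs in *; destruct (Rcase_abs _); lra.
  - rewrite (cet4_map_piece i _ Hi Hz). unfold end_value.
    destruct (slope_cases d i) as [E | E]; rewrite E;
      unfold Rabs; destruct (Rcase_abs _); lra.
Qed.

Lemma cet4_right_limit (k : nat) : (k < 4)%nat ->
  side_limit D (cet4_map d) (brk d k) (start_value d k).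
Proof.
  intros Hk. pose proof (brk_bounds k Hk).
  apply (side_limit_of_path _ _ _ _ (piece_len d k) (fun t => brk d k + t));
    [unfold piece_len; lra|].
  intros t Ht. unfold piece_len in Ht.
  assert (Hz : brk d k < brk d k + t < brk d (S k)) by lra.
  split; [apply Dom_cet4; now exists k|]. split.
  - eapply Rle_trans; [apply cdist_le_Rabs|]. unfold Rabs; destruct (Rcase_abs _); lra.
  - rewrite (cet4_map_piece k _ Hk Hz). unfold start_value.
    destruct (slope_cases d k) as [E | E]; rewrite E;
      unfold Rabs; destruct (Rcase_abs _); lra.
Qed.

Lemma cet4_no_limit_at_brk (k : nat) : (k < 4)%nat ->
  ~ (exists y, circ_pt y /\ forall eps, 0 < eps -> exists delta, 0 < delta /\
       forall z, D z -> cdist z (brk d k) < delta -> cdist (cet4_map d z) y < eps).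
Proof.
  intros Hk.
  assert (Hi : (prev_piece k < 4)%nat) by (destruct k as [|[|[|[|k]]]]; simpl; lia).
  apply no_limit_of_side_limits with (end_value d (prev_piece k)) (start_value d k).
  - intros z Hz. apply Dom_cet4 in Hz as [i [Hi' Hz]].
    pose proof (cet4_map_in_unit i z Hi' Hz). lra.
  - apply (values_in_circle d Hd _ Hi).
  - apply (values_in_circle d Hd _ Hk).
  - apply cdist_pos, (jumps d Hd k Hk).
  - exact (cet4_left_limit k Hk).
  - exact (cet4_right_limit k Hk).
Qed.

Lemma cet4_is_CET : is_CET 4 (brk d) (piece_len d) (cet4_map d).
Proof.
  pose proof (brk_increasing d Hd).
  split; [|split; [|split; [|split; [|split]]]].
  - intros i Hi. pose proof (brk_bounds i Hi). unfold open_arc, piece_len. lra.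
  - intros i j x Hi Hj Hij Hxi Hxj.
    apply (arc_piece i x Hi) in Hxi. apply (arc_piece j x Hj) in Hxj.
    destruct i as [|[|[|[|i]]]]; destruct j as [|[|[|[|j]]]]; simpl in *; lia || lra.
  - intros x Hx. unfold circ_pt in Hx.
    assert (Hi : exists i, (i < 4)%nat /\ brk d i <= x <= brk d (S i)).
    { destruct (Rle_dec x (brk1 d)); [exists 0%nat; simpl; split; [lia | lra]|].
      destruct (Rle_dec x (brk2 d)); [exists 1%nat; simpl; split; [lia | lra]|].
      destruct (Rle_dec x (brk3 d)); [exists 2%nat; simpl; split; [lia | lra]|].
      exists 3%nat; simpl; split; [lia | lra]. }
    destruct Hi as [i [Hi Hxi]]. exists i. split; [exact Hi|].
    exists (x - brk d i). unfold piece_len. split; [lra|].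
    rewrite frac_part_id; [ring | lra].
  - intros x y Hx Hy Hxy.
    apply Dom_cet4 in Hx as [i [Hi Hx]]. apply Dom_cet4 in Hy as [j [Hj Hy]].
    rewrite (cet4_map_piece i x Hi Hx), (cet4_map_piece j y Hj Hy) in Hxy.
    destruct (Nat.eq_dec i j) as [<- | Hij].
    + destruct (slope_cases d i) as [E | E]; rewrite E in Hxy; lra.
    + exfalso. exact (images_disjoint d Hd i j x y Hi Hj Hij Hx Hy Hxy).
  - exact cet4_piece_isometry.
  - intros p Hp HnD. destruct (not_Dom_brk p Hp HnD) as [k [Hk ->]].
    exact (cet4_no_limit_at_brk k Hk).
Qed.

Lemma cet4_nflips (f : nat) : length (filter (flip d) (seq 0 4)) = f ->
  nflips 4 (brk d) (piece_len d) (cet4_map d) f.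
Proof. intros Hf. exists (flip d). split; [exact cet4_flip_reverses | exact Hf]. Qed.

Lemma iter_def_cet4_S (i j : nat) (x q : R) : (i < 4)%nat -> brk d i < x < brk d (S i) ->
  iter_def 4 (brk d) (piece_len d) (cet4_map d) j (offset d i + slope d i * x) q ->
  iter_def 4 (brk d) (piece_len d) (cet4_map d) (S j) x q.
Proof.
  intros Hi Hx Hj. split; [apply Dom_cet4; now exists i|].
  now rewrite (cet4_map_piece i x Hi Hx).
Qed.

End Cet4.

Lemma cet4_in_C (d : cet4) (f : nat) (L : R) (hA hB : nat) (lvs : list level) :
  cet4_wf d -> 0 < L <= 1 ->
  (forall x, 0 < x < (1 - inv_golden) * L ->
     iter_def 4 (brk d) (piece_len d) (cet4_map d) hA x (x + inv_golden * L)) ->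
  (forall x, (1 - inv_golden) * L < x < L ->
     iter_def 4 (brk d) (piece_len d) (cet4_map d) hB x (x - (1 - inv_golden) * L)) ->
  Forall (level_ok 4 (brk d) (piece_len d) (cet4_map d) L) lvs -> levels_cover 0 lvs ->
  length (filter (flip d) (seq 0 4)) = f ->
  in_C 4 f (brk d) (piece_len d) (cet4_map d).
Proof.
  intros Hd HL HA HB Hlvs Hcov Hf. split; [|split].
  - exact (cet4_is_CET d Hd).
  - apply (transitive_of_return_rotation _ _ _ _ L hA hB HL HA HB).
    exact (approached_of_levels _ _ _ _ L lvs Hlvs Hcov).
  - exact (cet4_nflips d Hd f Hf).
Qed.

Definition cet_one_flip : cet4 := Cet4 ((1 - inv_golden) / 4) (1/4) (1/2)
  (fun i => match i with
            | 0 => 3/4 - (1 - inv_golden) / 4 | 1 => 1/2 - (1 - inv_golden) / 4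
            | 2 => 1/2 | _ => 1 end)
  (fun i => match i with 3 => true | _ => false end).

Definition cet_two_flips : cet4 :=
  Cet4 ((1 - inv_golden) / 2) (1/2) (1/2 + (1 - inv_golden) / 2)
  (fun i => match i with
            | 0 => 1/2 + (1 - inv_golden) / 2 | 1 => 1/2
            | 2 => 1 | _ => - (1/2) - (1 - inv_golden) / 2 end)
  (fun i => match i with 0 | 2 => true | _ => false end).

Definition cet_three_flips : cet4 := Cet4 ((1 - inv_golden) / 4) (1/4) (1/2)
  (fun i => match i with
            | 0 => 3/4 + (1 - inv_golden) / 4 | 1 => 1 + (1 - inv_golden) / 4
            | 2 => 1 | _ => - (1/2) end)
  (fun i => match i with 3 => false | _ => true end).

Definition cet_four_flips : cet4 := Cet4 ((1 - inv_golden) / 4) (1/4) (1/2)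
  (fun i => match i with
            | 0 => 1/2 + (1 - inv_golden) / 4 | 1 => 3/4 + (1 - inv_golden) / 4
            | 2 => 5/4 | _ => 1 end)
  (fun _ => true).

(* The levels are listed in the order of their images along the circle. *)
Definition cet_one_flip_tower : list level :=
  [Level 0 0 ((1 - inv_golden) / 4) 0 false;
   Level 0 ((1 - inv_golden) / 4) (1/4) 0 false;
   Level 2 0 ((1 - inv_golden) / 4) (1/4 + (1 - inv_golden) / 4) true;
   Level 2 ((1 - inv_golden) / 4) (1/4) (1/2 + (1 - inv_golden) / 4) true;
   Level 1 ((1 - inv_golden) / 4) (1/4) (1/2 - (1 - inv_golden) / 4) false;
   Level 1 0 ((1 - inv_golden) / 4) (3/4 - (1 - inv_golden) / 4) false;
   Level 3 0 ((1 - inv_golden) / 4) (3/4 + (1 - inv_golden) / 4) true;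
   Level 3 ((1 - inv_golden) / 4) (1/4) (1 + (1 - inv_golden) / 4) true].

Definition cet_two_flips_tower : list level :=
  [Level 0 0 ((1 - inv_golden) / 2) 0 false;
   Level 0 ((1 - inv_golden) / 2) (1/2) 0 false;
   Level 1 0 ((1 - inv_golden) / 2) (1/2 + (1 - inv_golden) / 2) true;
   Level 1 ((1 - inv_golden) / 2) (1/2) (1/2) false].

Definition cet_three_flips_tower : list level :=
  [Level 0 0 ((1 - inv_golden) / 4) 0 false;
   Level 0 ((1 - inv_golden) / 4) (1/4) 0 false;
   Level 2 0 ((1 - inv_golden) / 4) (1/4 + (1 - inv_golden) / 4) true;
   Level 2 ((1 - inv_golden) / 4) (1/4) (1/2 + (1 - inv_golden) / 4) true;
   Level 3 ((1 - inv_golden) / 4) (1/4) (1/2 - (1 - inv_golden) / 4) false;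
   Level 3 0 ((1 - inv_golden) / 4) (3/4 - (1 - inv_golden) / 4) false;
   Level 1 0 ((1 - inv_golden) / 4) (3/4 + (1 - inv_golden) / 4) true;
   Level 1 ((1 - inv_golden) / 4) (1/4) (1 + (1 - inv_golden) / 4) true].

Definition cet_four_flips_tower : list level :=
  [Level 0 0 ((1 - inv_golden) / 4) 0 false;
   Level 0 ((1 - inv_golden) / 4) (1/4) 0 false;
   Level 2 ((1 - inv_golden) / 4) (1/4) (1/4 - (1 - inv_golden) / 4) false;
   Level 2 0 ((1 - inv_golden) / 4) (1/2 - (1 - inv_golden) / 4) false;
   Level 1 0 ((1 - inv_golden) / 4) (1/2 + (1 - inv_golden) / 4) true;
   Level 1 ((1 - inv_golden) / 4) (1/4) (3/4 + (1 - inv_golden) / 4) true;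
   Level 3 0 ((1 - inv_golden) / 4) (3/4 + (1 - inv_golden) / 4) true;
   Level 3 ((1 - inv_golden) / 4) (1/4) (1 + (1 - inv_golden) / 4) true].

Ltac cet4_simpl :=
  cbv beta iota delta [cet_one_flip cet_two_flips cet_three_flips cet_four_flips
    cet_one_flip_tower cet_two_flips_tower cet_three_flips_tower cet_four_flips_tower
    brk slope offset flip brk1 brk2 brk3 start_value end_value prev_piece
    levels_cover level_bot level_top lv_lo lv_hi lv_shift lv_flip] in *.

Ltac prove_cet4_wf :=
  pose proof inv_golden_bounds; split;
  [ cet4_simpl; lra
  | intros i Hi; destruct i as [|[|[|[|i]]]]; try lia; cet4_simpl; lra
  | intros i j x y Hi Hj Hij Hx Hy;
    destruct i as [|[|[|[|i]]]]; destruct j as [|[|[|[|j]]]]; try lia; cet4_simpl; lra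
  | intros k Hk; destruct k as [|[|[|[|k]]]]; try lia; cet4_simpl;
    unfold Rabs; destruct (Rcase_abs _); lra ].

Ltac follow_orbit wf :=
  repeat first
    [ apply (iter_def_cet4_S _ wf 0); [lia | cet4_simpl; lra |]
    | apply (iter_def_cet4_S _ wf 1); [lia | cet4_simpl; lra |]
    | apply (iter_def_cet4_S _ wf 2); [lia | cet4_simpl; lra |]
    | apply (iter_def_cet4_S _ wf 3); [lia | cet4_simpl; lra |] ];
  simpl; cet4_simpl; lra.

Ltac prove_tower wf :=
  apply Forall_forall; intros lv Hlv;
  repeat (destruct Hlv as [<- | Hlv];
          [ cbv beta iota delta [level_ok level_map lv_height lv_lo lv_hi lv_shift lv_flip];
            split; [lra | split; [lra | intros x Hx; follow_orbit wf]] | ]);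
  destruct Hlv.

Ltac solve_cet4_example wf :=
  pose proof inv_golden_bounds;
  lazymatch goal with
  | |- _ < _ <= _ => lra
  | |- forall x, _ -> iter_def _ _ _ _ _ _ _ => intros x Hx; follow_orbit wf
  | |- Forall _ _ => prove_tower wf
  | |- levels_cover _ _ => cet4_simpl; lra
  | |- length _ = _ => reflexivity
  end.

Lemma cet_one_flip_wf : cet4_wf cet_one_flip.
Proof. prove_cet4_wf. Qed.

Lemma cet_two_flips_wf : cet4_wf cet_two_flips.
Proof. prove_cet4_wf. Qed.

Lemma cet_three_flips_wf : cet4_wf cet_three_flips.
Proof. prove_cet4_wf. Qed.

Lemma cet_four_flips_wf : cet4_wf cet_four_flips.
Proof. prove_cet4_wf. Qed.

Lemma cet_one_flip_in_C :
  in_C 4 1 (brk cet_one_flip) (piece_len cet_one_flip) (cet4_map cet_one_flip).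
Proof.
  apply (cet4_in_C _ _ (1/4) 4 4 cet_one_flip_tower cet_one_flip_wf);
    solve_cet4_example cet_one_flip_wf.
Qed.

Lemma cet_two_flips_in_C :
  in_C 4 2 (brk cet_two_flips) (piece_len cet_two_flips) (cet4_map cet_two_flips).
Proof.
  apply (cet4_in_C _ _ (1/2) 2 2 cet_two_flips_tower cet_two_flips_wf);
    solve_cet4_example cet_two_flips_wf.
Qed.

Lemma cet_three_flips_in_C :
  in_C 4 3 (brk cet_three_flips) (piece_len cet_three_flips) (cet4_map cet_three_flips).
Proof.
  apply (cet4_in_C _ _ (1/4) 4 4 cet_three_flips_tower cet_three_flips_wf);
    solve_cet4_example cet_three_flips_wf.
Qed.

Lemma cet_four_flips_in_C :
  in_C 4 4 (brk cet_four_flips) (piece_len cet_four_flips) (cet4_map cet_four_flips).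
Proof.
  apply (cet4_in_C _ _ (1/4) 4 4 cet_four_flips_tower cet_four_flips_wf);
    solve_cet4_example cet_four_flips_wf.
Qed.

Theorem corollary9p4 :
  forall f : nat, (1 <= f <= 4)%nat ->
    exists (a l : nat -> R) (T : R -> R), in_C 4 f a l T.
Proof.
  intros f Hf. destruct f as [|[|[|[|[|f]]]]]; try lia; do 3 eexists.
  - exact cet_one_flip_in_C.
  - exact cet_two_flips_in_C.
  - exact cet_three_flips_in_C.
  - exact cet_four_flips_in_C.
Qed.
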